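(* For every $d\ge 2$ there is a number $M_d>0$ such that the following holds: if $H_1,\dots,H_d$ are mutually orthogonal affine hyperplanes in $\mathbb{R}^d$, then the set $\Gamma=\{\gamma(t):t\ge M_d\}$ intersects some $H_i$ in at most one point.
   Context: $\gamma:\mathbb{R}\to\mathbb{R}^d$ denotes the moment curve $\gamma(t)=(t,t^2,\dots,t^d)$. Affine hyperplanes are mutually orthogonal if their normal vectors are pairwise orthogonal. *)

From HB Require Import structures.
From mathcomp Require Import all_boot all_order all_algebra.
From mathcomp Require Import reals.
Set Implicit Arguments. Unset Strict Implicit. Unset Printing Implicit Defensive.
Import Order.TTheory GRing.Theory Num.Theory.
Local Open Scope ring_scope.

Definition dotv (R : realType) (d : nat) (u v : 'rV[R]_d) : R :=
  \sum_(k < d) u 0 k * v 0 k.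

(* The moment curve gamma(t) = (t, t^2, ..., t^d). *)
Definition moment_curve (R : realType) (d : nat) (t : R) : 'rV[R]_d :=
  \row_(i < d) t ^+ i.+1.

(* The affine hyperplane {x | <n, x> = b}; it is a genuine hyperplane when n != 0. *)
Definition on_hyperplane (R : realType) (d : nat) (n : 'rV[R]_d) (b : R)
  (x : 'rV[R]_d) : Prop := dotv n x = b.

From HB Require Import structures.
From mathcomp Require Import all_boot all_order all_algebra.
From mathcomp Require Import reals.
From mathcomp Require Import ring lra.
Import Order.TTheory GRing.Theory Num.Theory.
Local Open Scope ring_scope.

(* Parseval's identity for the orthogonal basis n_1, ..., n_d gives
   sum_i (n_i)_d^2 / |n_i|^2 = |e_d|^2 = 1, so some n_i has
   |n_i|^2 <= d (n_i)_d^2, hence every coordinate of n_i is at most d times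
   its last one in absolute value.  Along gamma, H_i is the zero set of the
   polynomial sum_k (n_i)_k t^k - b_i, whose leading coefficient dominates
   the others; for s < t beyond d^2 the increment of the leading term,
   (n_i)_d (t^d - s^d), then outweighs the increments of all lower terms, so
   the polynomial is injective there. *)

Section PowerIncrements.

Variable R : realFieldType.

Lemma subrX_ge0 [s t : R] (m : nat) : 0 <= s -> s <= t -> 0 <= t ^+ m - s ^+ m.
Proof.
by move=> s0 st; rewrite subr_ge0 lerXn2r // nnegrE; lra.
Qed.

Lemma mulr_subrX_le_subrXS [s t : R] (m : nat) : 0 <= s -> s <= t ->
  t * (t ^+ m - s ^+ m) <= t ^+ m.+1 - s ^+ m.+1.
Proof.
move=> s0 st.
have -> : t ^+ m.+1 - s ^+ m.+1 = t * (t ^+ m - s ^+ m) + s ^+ m * (t - s).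
  by rewrite !exprS; ring.
by rewrite lerDl mulr_ge0 ?exprn_ge0 ?subr_ge0.
Qed.

Lemma ler_subrX [s t : R] (m p : nat) : 1 <= s -> s <= t -> (m < p)%N ->
  s * (t ^+ m - s ^+ m) <= t ^+ p - s ^+ p.
Proof.
move=> s1 st; have s0 : 0 <= s by lra.
elim: p => // p IH; rewrite ltnS leq_eqVlt => /predU1P [-> | /IH le_mp].
  apply: le_trans (mulr_subrX_le_subrXS p s0 st).
  by rewrite ler_wpM2r ?subrX_ge0.
apply: le_trans (mulr_subrX_le_subrXS p s0 st).
have := subrX_ge0 p s0 st; nra.
Qed.

Lemma dominant_poly_neq (n : nat) (c : 'I_n.+1 -> R) (K s t : R) :
  c ord_max != 0 -> (forall k, `|c k| <= K * `|c ord_max|) ->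
  1 <= s -> n%:R * K < s -> s < t ->
  \sum_k c k * s ^+ k.+1 != \sum_k c k * t ^+ k.+1.
Proof.
move=> c_neq0 c_le s1 nK_lt st; apply/negP => /eqP E.
have s0 : 0 <= s by lra.
set D := t ^+ n.+1 - s ^+ n.+1.
have D_gt0 : 0 < D by rewrite subr_gt0 ltrXn2r //; lra.
set S := \sum_(k < n) c (widen_ord (leqnSn n) k)
                        * (t ^+ k.+1 - s ^+ k.+1).
have lead_eq : c ord_max * D = - S.
  have : \sum_k c k * (t ^+ k.+1 - s ^+ k.+1) = 0.
    under eq_bigr do rewrite mulrBr.
    by rewrite sumrB E subrr.
  by rewrite big_ord_recr /= -/S => /eqP; rewrite addrC addr_eq0 => /eqP.
have a_gt0 : 0 < `|c ord_max| * D by rewrite mulr_gt0 ?normr_gt0.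
have normS : `|S| = `|c ord_max| * D.
  by rewrite -normrN -lead_eq normrM (gtr0_norm D_gt0).
have : s * `|S| <= n%:R * K * (`|c ord_max| * D).
  apply: le_trans (ler_wpM2l s0 (ler_norm_sum _ _ _)) _.
  have -> : n%:R * K * (`|c ord_max| * D) = \sum_(k < n) K * (`|c ord_max| * D).
    by rewrite sumr_const card_ord -[RHS]mulr_natl mulrA.
  rewrite mulr_sumr; apply: ler_sum => k _.
  have gap := ler_subrX k.+1 n.+1 s1 (ltW st) (ltn_ord k).
  rewrite normrM (ger0_norm (subrX_ge0 _ s0 (ltW st))) mulrCA.
  apply: le_trans (ler_wpM2l (normr_ge0 _) gap) _.
  by rewrite mulrA ler_wpM2r ?(ltW D_gt0) ?c_le.
by rewrite normS; nra.
Qed.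

End PowerIncrements.

Section OrthogonalFamilies.

Context {R : realType} {d : nat}.
Implicit Types (u : 'rV[R]_d).

Lemma dotv_moment_curve u (s : R) :
  dotv u (moment_curve d s) = \sum_k u 0 k * s ^+ k.+1.
Proof. by apply: eq_bigr => k _; rewrite mxE. Qed.

Lemma sqr_coord_le_dotv u k : u 0 k ^+ 2 <= dotv u u.
Proof.
rewrite /dotv (bigD1 k) //= expr2 lerDl.
by apply: sumr_ge0 => j _; rewrite -expr2 sqr_ge0.
Qed.

Lemma dotvv_gt0 u : u != 0 -> 0 < dotv u u.
Proof.
move=> u_neq0; rewrite lt_def sumr_ge0 ?andbT => [|k _]; last first.
  by rewrite -expr2 sqr_ge0.
apply: contraNneq u_neq0 => /psumr_eq0P uu0; apply/eqP/rowP => k; rewrite mxE.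
have /eqP : u 0 k * u 0 k = 0 by apply: uu0 => // j _; rewrite -expr2 sqr_ge0.
by rewrite mulf_eq0 orbb => /eqP.
Qed.

Lemma dominant_coord_norm_le [u] [K : R] [l] :
  1 <= K -> dotv u u <= K * u 0 l ^+ 2 -> forall k, `|u 0 k| <= K * `|u 0 l|.
Proof.
move=> K1 uu_le k.
rewrite -(ler_pXn2r (ltn0Sn 1)) ?nnegrE ?mulr_ge0 //; last lra.
rewrite exprMn !real_normK ?num_real //.
have := sqr_coord_le_dotv u k; have := sqr_ge0 (u 0 l); nra.
Qed.

Variable n : 'I_d -> 'rV[R]_d.
Hypothesis n_neq0 : forall i, n i != 0.
Hypothesis n_orth : forall i j, i != j -> dotv (n i) (n j) = 0.

(* With A the matrix of rows n_i and B the matrix of columns n_i / |n_i|^2,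
   orthogonality says A B = 1, so B A = 1, whose diagonal is the identity. *)
Lemma orthogonal_sum_coord_sqr k :
  \sum_i n i 0 k ^+ 2 / dotv (n i) (n i) = 1.
Proof.
set A : 'M[R]_d := \matrix_(i, j) n i 0 j.
set B : 'M[R]_d := \matrix_(j, i) (n i 0 j / dotv (n i) (n i)).
have AB : A *m B = 1%:M.
  apply/matrixP => i j; rewrite !mxE.
  under eq_bigr do rewrite !mxE mulrA.
  rewrite -mulr_suml -/(dotv (n i) (n j)).
  have [<-|ij] := eqVneq i j; last by rewrite n_orth ?mul0r.
  by rewrite divff // gt_eqF ?dotvv_gt0.
have /matrixP/(_ k k) := mulmx1C AB; rewrite !mxE eqxx => BA.
by apply: etrans BA; apply: eq_bigr => i _; rewrite !mxE mulrAC.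
Qed.

Lemma orthogonal_exists_dominant_coord k :
  exists i, dotv (n i) (n i) <= d%:R * n i 0 k ^+ 2.
Proof.
apply/existsP; apply: contraT => /existsPn small.
have : \sum_i d%:R * (n i 0 k ^+ 2 / dotv (n i) (n i)) < \sum_(i < d) 1.
  apply: ltr_sum; first by apply/hasP; exists k; rewrite ?mem_index_enum.
  move=> i _; rewrite mulrA ltr_pdivrMr ?dotvv_gt0 // mul1r.
  by rewrite ltNge small.
by rewrite -mulr_sumr orthogonal_sum_coord_sqr mulr1 sumr_const card_ord ltxx.
Qed.

End OrthogonalFamilies.

Theorem lemma2p2 (R : realType) (d : nat) (hd : (2 <= d)%N) :
  exists M : R, 0 < M /\
    forall (n : 'I_d -> 'rV[R]_d) (b : 'I_d -> R),
      (forall i, n i != 0) ->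
      (forall i j, i != j -> dotv (n i) (n j) = 0) ->
      exists i : 'I_d, forall s t : R, M <= s -> M <= t ->
        on_hyperplane (n i) (b i) (moment_curve d s) ->
        on_hyperplane (n i) (b i) (moment_curve d t) ->
        moment_curve d s = moment_curve d t.
Proof.
case: d hd => [|d'] // _; set K : R := d'.+1%:R.
have K1 : 1 <= K by rewrite ler1n.
exists (K ^+ 2); split; first by rewrite exprn_gt0 //; lra.
move=> n b n_neq0 n_orth.
have [i dom] := orthogonal_exists_dominant_coord _ n_neq0 n_orth ord_max.
exists i => s t Ms Mt; rewrite /on_hyperplane !dotv_moment_curve => hs ht.
have lead_neq0 : n i 0 ord_max != 0.
  apply: contraTneq dom => ->; rewrite expr0n mulr0 -ltNge.
  exact: dotvv_gt0.
have coef_le := dominant_coord_norm_le K1 dom.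
have M_gt : d'%:R * K < K ^+ 2 by rewrite expr2 ltr_pM2r ?ltr_nat //; lra.
have neq x y : K ^+ 2 <= x -> x < y ->
    \sum_k n i 0 k * x ^+ k.+1 != \sum_k n i 0 k * y ^+ k.+1.
  move=> Mx xy; apply: dominant_poly_neq lead_neq0 coef_le _ _ xy; nra.
have [st|ts|-> //] := ltgtP s t.
- by have := neq _ _ Ms st; rewrite hs ht eqxx.
- by have := neq _ _ Mt ts; rewrite hs ht eqxx.
Qed.
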